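(* Let $S=\{x_1,\ldots,x_n\}$ be a factor-closed set of $n$ distinct positive integers. Let $m\ge1$, $\boldsymbol k=(k_1,\ldots,k_m)\in\mathbb{N}^m$, $|\boldsymbol k|:=k_1+\cdots+k_m$, and let $F(\boldsymbol r;\boldsymbol n_1,\ldots,\boldsymbol n_m)$ be even $\pmod{\boldsymbol r^{(\boldsymbol k)}}$. Define the $(m+|\boldsymbol k|)$-dimensional matrix $B$ of order $n$ by \[ B(i_1,\ldots,i_{m+|\boldsymbol k|}):=F\bigl(x_{i_1},\ldots,x_{i_m};\,\underbrace{x_{i_{m+1}},\ldots,x_{i_{m+k_1}}}_{k_1},\ldots,\underbrace{x_{i_{m+k_1+\cdots+k_{m-1}+1}},\ldots,x_{i_{m+|\boldsymbol k|}}}_{k_m}\bigr). \] Let $I\subseteq\{1,\ldots,m+|\boldsymbol k|\}$ have even cardinality and satisfy $\{m+1,\ldots,m+|\boldsymbol k|\}\subseteq I$; put $\varepsilon_j=1$ if $j\in I$ and $0$ otherwise, and let $\widetilde I:=\{j\in\{1,\ldots,m\}:\varepsilon_j+k_j\text{ is odd}\}$. Then \[ \det_IB=(x_1\cdots x_n)^{|\boldsymbol k|}\,\det_{\widetilde I}\Bigl(\alpha_{(x_{i_1},\ldots,x_{i_m})}\bigl(\underbrace{x_{i_1},\ldots,x_{i_1}}_{k_1},\ldots,\underbrace{x_{i_m},\ldots,x_{i_m}}_{k_m}\bigr)\Bigr)_{1\le i_1,\ldots,i_m\le n}. \]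
   Context: A set $S$ of positive integers is factor-closed if every positive divisor of every element of $S$ lies in $S$. $c(k,n):=\sum_{d\mid\gcd(k,n)}\mu(k/d)\,d$ is the Ramanujan sum. For $\boldsymbol r=(r_1,\ldots,r_m)\in\mathbb{N}^m$, variables are grouped as $\boldsymbol n_j\in\mathbb{N}^{k_j}$; for $\boldsymbol n=(n_1,\ldots,n_t)\in\mathbb{N}^t$ and $r\in\mathbb{N}$ write $\gcd(\boldsymbol n,r):=(\gcd(n_1,r),\ldots,\gcd(n_t,r))$, write $\boldsymbol n\mid r$ if $n_i\mid r$ for all $i$, and then $r/\boldsymbol n:=(r/n_1,\ldots,r/n_t)$; for $\boldsymbol a,\boldsymbol b\in\mathbb{N}^t$, $c(\boldsymbol a,\boldsymbol b):=\prod_{i=1}^tc(a_i,b_i)$. A family of functions $F(\boldsymbol r;\boldsymbol n_1,\ldots,\boldsymbol n_m)\in\mathbb{C}$, indexed by $\boldsymbol r\in\mathbb{N}^m$, of the $|\boldsymbol k|$ variables $\boldsymbol n_j\in\mathbb{N}^{k_j}$, is even $\pmod{\boldsymbol r^{(\boldsymbol k)}}$ if $F(\boldsymbol r;\gcd(\boldsymbol n_1,r_1),\ldots,\gcd(\boldsymbol n_m,r_m))=F(\boldsymbol r;\boldsymbol n_1,\ldots,\boldsymbol n_m)$ for all $\boldsymbol r$ and all arguments. Its finite Fourier coefficients are, for $\boldsymbol d_j\in\mathbb{N}^{k_j}$ with $\boldsymbol d_j\mid r_j$, \[ \alpha_{\boldsymbol r}(\boldsymbol d_1,\ldots,\boldsymbol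 d_m):=\frac{1}{r_1^{k_1}\cdots r_m^{k_m}}\sum_{\substack{\boldsymbol\delta_j\in\mathbb{N}^{k_j},\ \boldsymbol\delta_j\mid r_j\\ (j=1,\ldots,m)}}F(\boldsymbol r;\boldsymbol\delta_1,\ldots,\boldsymbol\delta_m)\prod_{j=1}^mc\Bigl(\frac{r_j}{\boldsymbol\delta_j},\frac{r_j}{\boldsymbol d_j}\Bigr). \] Hyperdeterminant: for a $K$-dimensional matrix $A$ of order $n$ and $J\subseteq\{1,\ldots,K\}$, with $\eta_j=1$ if $j\in J$ and $0$ otherwise, $\det_JA:=\frac{1}{n!}\sum_{\sigma_1,\ldots,\sigma_K\in\mathfrak{S}_n}\prod_{j=1}^K\mathrm{sgn}(\sigma_j)^{\eta_j}\prod_{v=1}^nA(\sigma_1(v),\ldots,\sigma_K(v))$, where $\mathfrak{S}_n$ is the symmetric group on $\{1,\ldots,n\}$. *)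

From HB Require Import structures.
From mathcomp Require Import all_boot all_order all_fingroup all_algebra.
Set Implicit Arguments. Unset Strict Implicit. Unset Printing Implicit Defensive.
Import Order.TTheory GRing.Theory Num.Theory.
Local Open Scope ring_scope.

(* Moebius function (on positive integers; value at 0 irrelevant). *)
Definition moebius (n : nat) : int :=
  if all (fun p => logn p n == 1%N) (primes n)
  then (-1) ^+ size (primes n) else 0.

Definition ramanujan (k n : nat) : int :=
  \sum_(d <- divisors (gcdn k n)) moebius (k %/ d) * d%:Z.

Definition psign (C : nzRingType) n (s : 'S_n) : C := (-1) ^+ odd_perm s.

Definition hdet (C : fieldType) (K n : nat) (J : {set 'I_K})
    (A : {ffun 'I_K -> 'I_n} -> C) : C :=
  (n`!%:R)^-1 * \sum_(s : {ffun 'I_K -> {perm 'I_n}})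
     ((\prod_(j in J) psign C (s j)) *
      \prod_(v < n) A [ffun j => s j v]).

(* Grouped variable indices: p = (j, t) is the t-th variable of group j. *)
Definition vdom (m : nat) (k : 'I_m -> nat) := {j : 'I_m & 'I_(k j)}.

(* Finite Fourier coefficient alpha_r(d) of F (even mod r^(k)).
   The sum over divisor tuples delta (delta_j | r_j) is taken over
   functions into 'I_(max r).+1, filtered by divisibility. *)
Definition alpha (C : numClosedFieldType) (m : nat) (k : 'I_m -> nat)
    (F : {ffun 'I_m -> nat} -> {ffun vdom k -> nat} -> C)
    (r : {ffun 'I_m -> nat}) (d : {ffun vdom k -> nat}) : C :=
  (\prod_(j < m) (r j)%:R ^+ k j)^-1 *
  \sum_(delta : {ffun vdom k -> 'I_(\max_(j < m) r j).+1}
          | [forall p, (nat_of_ord (delta p) %| r (tag p))%N])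
     (F r [ffun p => nat_of_ord (delta p)] *
      \prod_(p : vdom k)
         (ramanujan (r (tag p) %/ delta p) (r (tag p) %/ d p))%:~R).

(* Position (0-based, among the |k| grouped variables) of variable p. *)
Definition voffset (m : nat) (k : 'I_m -> nat) (p : vdom k) : nat :=
  (\sum_(l < m | (l < tag p)%N) k l + tagged p)%N.

Lemma voffset_lt (m : nat) (k : 'I_m -> nat) (p : vdom k) :
  (voffset p < \sum_(l < m) k l)%N.
Proof.
case: p => j t; rewrite /voffset /=.
rewrite [X in (_ < X)%N](bigID (fun l : 'I_m => (l < j)%N)) /=.
rewrite ltn_add2l.
rewrite (bigD1 j) /=; last by rewrite ltnn.
by apply: (leq_trans (ltn_ord t)); rewrite leq_addr.
Qed.

Definition vpos (m : nat) (k : 'I_m -> nat) (p : vdom k) : 'I_(\sum_(l < m) k l) :=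
  Ordinal (voffset_lt p).

Definition matB (C : numClosedFieldType) (n m : nat) (k : 'I_m -> nat)
    (x : 'I_n -> nat)
    (F : {ffun 'I_m -> nat} -> {ffun vdom k -> nat} -> C)
    (i : {ffun 'I_(m + \sum_(l < m) k l) -> 'I_n}) : C :=
  F [ffun j : 'I_m => x (i (lshift (\sum_(l < m) k l) j))]
    [ffun p : vdom k => x (i (rshift m (vpos p)))].

Definition matAlpha (C : numClosedFieldType) (n m : nat) (k : 'I_m -> nat)
    (x : 'I_n -> nat)
    (F : {ffun 'I_m -> nat} -> {ffun vdom k -> nat} -> C)
    (i : {ffun 'I_m -> 'I_n}) : C :=
  alpha F [ffun j => x (i j)] [ffun p : vdom k => x (i (tag p))].

Definition even_mod (C : numClosedFieldType) (m : nat) (k : 'I_m -> nat)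
    (F : {ffun 'I_m -> nat} -> {ffun vdom k -> nat} -> C) : Prop :=
  forall (r : {ffun 'I_m -> nat}) (v : {ffun vdom k -> nat}),
    (forall j, (0 < r j)%N) -> (forall p, (0 < v p)%N) ->
    F r [ffun p => gcdn (v p) (r (tag p))] = F r v.

(* Factor-closed set given by an injective enumeration x of positive ints. *)
Definition factor_closed_enum (n : nat) (x : 'I_n -> nat) : Prop :=
  injective x /\ (forall i, (0 < x i)%N) /\
  (forall i d, (0 < d)%N -> (d %| x i)%N -> exists j, x j = d).

From mathcomp Require Import all_boot all_order all_fingroup all_algebra.
From mathcomp Require Import zify ring.
Set Implicit Arguments. Unset Strict Implicit. Unset Printing Implicit Defensive.
Import Order.TTheory GRing.Theory Num.Theory.
Local Open Scope ring_scope.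

(* Since F is even, F(r; n) only depends on gcd(n, r); as S is factor-closed, Moebius
   inversion on the divisibility order of S expands F(r; x_w) as a sum over e | w of
   coefficients G(r, e) that vanish unless e | r.  Substituting this into det_I B and
   summing first over the permutations of the |k| trailing coordinates, each trailing
   coordinate contributes the determinant of a zeta matrix [x_(f v) | x_(s v)]_(v, s).
   It vanishes unless f is a permutation t, and t <= sigma pointwise for divisibility
   forces t = sigma, so only the diagonal term e = r survives.  There
   G(r, r) = (prod_j r_j^k_j) alpha_r(r, ..., r) because c(z, 1) = mu(z), and the sign
   of sigma_j, taken k_j times, toggles the membership of j in I. *)

Lemma prodr_bool (R : comPzSemiRingType) (T : finType) (P : pred T) :
  \prod_(i : T) (P i)%:R = [forall i, P i]%:R :> R.
Proof.
have [/forallP P_all | /forallPn[i /negbTE Pi]] := boolP [forall i, P i].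
  by rewrite big1 // => i _; rewrite P_all.
by rewrite (bigD1 i) //= Pi mul0r.
Qed.

Lemma prod_sign_parity (R : comPzRingType) (T : finType) (P : pred T) (e : T -> nat)
    (b : T -> bool) :
  (\prod_(i | P i) (-1) ^+ b i) * \prod_i ((-1) ^+ b i) ^+ e i
  = \prod_(i in [set j | odd (P j + e j)]) (-1) ^+ b i :> R.
Proof.
rewrite big_mkcond -big_split [RHS]big_mkcond; apply: eq_bigr => i _.
rewrite inE oddD -exprM -[(-1) ^+ (_ * _)]signr_odd oddM.
by case: (P i) (b i) (odd (e i)) => [] [] [] /=;
  rewrite ?(mul1r, mulr1, expr0, expr1, mulrNN).
Qed.

Lemma dvdn_inord M a b : (0 < b)%N -> (b <= M)%N ->
  ((inord a : 'I_M.+1) %| b)%N = (a %| b)%N.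
Proof.
move=> b_gt0 le_bM; have [a_le|a_gt] := leqP a M; first by rewrite inordK.
rewrite /inord /insubd insubF ?ltnS 1?leqNgt ?a_gt //= dvd0n gtn_eqF //.
apply/esym/negbTE; apply: contraTN a_gt => /(dvdn_leq b_gt0) le_ab.
by rewrite -leqNgt (leq_trans le_ab).
Qed.

(** * The Moebius function *)

Lemma moebius_sqr_dvd p d : prime p -> (0 < d)%N -> (p ^ 2 %| d)%N -> moebius d = 0.
Proof.
move=> p_pr d_gt0 p2d; rewrite /moebius.
have p_d : p \in primes d.
  by rewrite mem_primes p_pr d_gt0; apply: dvdn_trans p2d; rewrite dvdn_exp.
have : (2 <= logn p d)%N by rewrite -pfactor_dvdn.
by case: allP => // /(_ p p_d) /eqP ->.
Qed.

Lemma moebius_mul_prime p d : prime p -> (0 < d)%N -> ~~ (p %| d)%N ->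
  moebius (p * d) = - moebius d.
Proof.
move=> p_pr d_gt0 pNd; have p_gt0 := prime_gt0 p_pr.
have pNd' : p \notin primes d by rewrite mem_primes p_pr d_gt0.
have primes_pd : perm_eq (primes (p * d)) (p :: primes d).
  apply: uniq_perm; rewrite ?primes_uniq //= ?pNd' ?primes_uniq // => q.
  by rewrite primesM // (primes_prime p_pr) !inE.
rewrite /moebius (perm_size primes_pd) (perm_all _ primes_pd) /=.
rewrite lognM // logn_prime // eqxx (lognE p d) p_pr d_gt0 (negbTE pNd) /=.
rewrite (@eq_in_all _ _ (fun q => logn q d == 1%N)) => [|q q_d].
  by case: all => //; rewrite exprS mulN1r.
have q_pr : prime q by move: q_d; rewrite mem_primes => /andP[].
rewrite lognM // logn_prime // (_ : (q == p) = false) //.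
by apply: contraNF pNd' => /eqP <-.
Qed.

Lemma ndvdn_divn_sqr p d : (0 < p)%N -> (p %| d)%N -> ~~ (p ^ 2 %| d)%N ->
  ~~ (p %| d %/ p)%N.
Proof.
move=> p_gt0 pd; apply: contra; rewrite -{2}(divnK pd) mulnC expnS expn1.
by rewrite dvdn_pmul2l.
Qed.

Lemma sum_moebius_sqr_free_divisors p c : prime p -> (0 < c)%N ->
  \sum_(d <- divisors c) moebius d =
  \sum_(d <- [seq d <- divisors c | ~~ (p ^ 2 %| d)%N]) moebius d.
Proof.
move=> p_pr c_gt0; rewrite big_filter [RHS]big_mkcond; apply: eq_big_seq => d.
rewrite -dvdn_divisors //; case: ifPn => //= /negbNE p2d dc.
by rewrite (moebius_sqr_dvd p_pr _ p2d) ?(dvdn_gt0 c_gt0).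
Qed.

(* Pairing d with d * p or d / p, where p is the least prime factor of c, is a
   sign-reversing involution on the squarefree divisors of c > 1. *)
Lemma sum_moebius_divisors c : (0 < c)%N ->
  \sum_(d <- divisors c) moebius d = (c == 1)%:R.
Proof.
move=> c_gt0; case: (ltngtP c 1) => [|c_gt1|->]; last by rewrite big_seq1.
  by rewrite ltnNge c_gt0.
set p := pdiv c; have p_pr : prime p by apply: pdiv_prime.
have p_gt0 := prime_gt0 p_pr; have p_c : (p %| c)%N by apply: pdiv_dvd.
pose s := [seq d <- divisors c | ~~ (p ^ 2 %| d)%N].
pose flip d := if (p %| d)%N then (d %/ p)%N else (p * d)%N.
have in_s d : (d \in s) = (d %| c)%N && ~~ (p ^ 2 %| d)%N.
  by rewrite mem_filter -dvdn_divisors // andbC.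
have s_spec d : d \in s -> [/\ (0 < d)%N, (d %| c)%N & ~~ (p ^ 2 %| d)%N].
  by rewrite in_s => /andP[dc ->]; rewrite dc (dvdn_gt0 c_gt0).
have flip_s d : d \in s -> flip d \in s.
  move=> /s_spec[d_gt0 dc p2Nd]; rewrite in_s /flip; case: ifPn => pd.
    rewrite (dvdn_trans (dvdn_div pd) dc) /=; apply: contra p2Nd => p2d.
    by rewrite -(divnK pd) dvdn_mulr.
  by rewrite Gauss_dvd ?prime_coprime // p_c dc expnS expn1 dvdn_pmul2l.
have flipK d : d \in s -> flip (flip d) = d.
  move=> /s_spec[d_gt0 _ p2Nd]; rewrite /flip /=; have [pd|pNd] := boolP (p %| d)%N.
    by rewrite (negbTE (ndvdn_divn_sqr p_gt0 pd p2Nd)) mulnC divnK.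
  by rewrite dvdn_mulr // mulKn.
have moebius_flip d : d \in s -> moebius (flip d) = - moebius d.
  move=> /s_spec[d_gt0 _ p2Nd]; rewrite /flip; case: ifPn => pd.
    have dp_gt0 : (0 < d %/ p)%N by rewrite divn_gt0 // dvdn_leq.
    by rewrite -{2}(divnK pd) mulnC moebius_mul_prime ?ndvdn_divn_sqr ?opprK.
  exact: moebius_mul_prime.
have perm_flip : perm_eq s (map flip s).
  apply: uniq_perm; rewrite ?filter_uniq ?divisors_uniq //.
    rewrite map_inj_in_uniq ?filter_uniq ?divisors_uniq // => d e ds es flip_de.
    by rewrite -(flipK d ds) flip_de flipK.
  move=> d; apply/idP/mapP => [ds|[e es ->]]; last exact: flip_s.
  by exists (flip d); rewrite ?flip_s ?flipK.
rewrite (sum_moebius_sqr_free_divisors p_pr c_gt0) -/s.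
have : \sum_(d <- s) moebius d = - \sum_(d <- s) moebius d.
  rewrite {1}(perm_big _ perm_flip) big_map -sumrN; apply: eq_big_seq => d.
  exact: moebius_flip.
by lia.
Qed.

Lemma ramanujan_n1 k : ramanujan k 1 = moebius k.
Proof. by rewrite /ramanujan gcdn1 (_ : divisors 1 = [:: 1%N]) // big_seq1 divn1 mulr1. Qed.

(** * Grouped variables *)

Lemma card_vdom m (k : 'I_m -> nat) : #|{: vdom k}| = (\sum_(l < m) k l)%N.
Proof.
by rewrite card_tagged sumnE big_map big_enum /=; apply: eq_bigr => j _; rewrite card_ord.
Qed.

Lemma prod_vdom_tag (R : comPzSemiRingType) m (k : 'I_m -> nat) (f : 'I_m -> R) :
  \prod_(p : vdom k) f (tag p) = \prod_(j < m) f j ^+ k j.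
Proof.
rewrite -(sig_big_dep xpredT (fun i (_ : 'I_(k i)) => true) (fun i _ => f i)) /=.
by apply: eq_bigr => j _; rewrite prodr_const card_ord.
Qed.

Lemma voffset_lt_tag m (k : 'I_m -> nat) (p : vdom k) (j : 'I_m) :
  (tag p < j)%N -> (voffset p < \sum_(l < m | (l < j)%N) k l)%N.
Proof.
case: p => i t /= lt_ij; rewrite /voffset /= -addnS.
rewrite [X in (_ <= X)%N](bigID (fun l : 'I_m => (l < i)%N)) /=; apply: leq_add.
  by apply: eq_leq; apply: eq_bigl => l; apply/esym/andb_idl => /ltn_trans; apply.
by rewrite (bigD1 i) /= ?ltnn ?lt_ij // (leq_trans (ltn_ord t)) ?leq_addr.
Qed.

Lemma vpos_inj m (k : 'I_m -> nat) : injective (@vpos m k).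
Proof.
move=> p1 p2 /(congr1 val) /= eq12.
have le_off (p : vdom k) : (\sum_(l < m | (l < tag p)%N) k l <= voffset p)%N.
  exact: leq_addr.
have tag12 : tag p1 = tag p2.
  case: (ltngtP (tag p1) (tag p2)) => [lt12|lt21|/val_inj //].
    by move: (leq_trans (voffset_lt_tag lt12) (le_off p2)); rewrite eq12 ltnn.
  by move: (leq_trans (voffset_lt_tag lt21) (le_off p1)); rewrite eq12 ltnn.
case: p1 p2 tag12 eq12 => [j t1] [j' t2] /= j_j'; subst j'.
by rewrite /voffset /= => /addnI /val_inj ->.
Qed.

Lemma vpos_bij m (k : 'I_m -> nat) : bijective (@vpos m k).
Proof. by apply: inj_card_bij; rewrite ?card_vdom ?card_ord //; apply: vpos_inj. Qed.

Lemma sum_ffun_split (R : nmodType) (T : finType) m (k : 'I_m -> nat)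
    (G : {ffun 'I_m -> T} -> {ffun vdom k -> T} -> R) :
  \sum_(s : {ffun 'I_(m + \sum_(l < m) k l) -> T})
     G [ffun i => s (lshift _ i)] [ffun p => s (rshift m (vpos p))]
  = \sum_(a : {ffun 'I_m -> T}) \sum_(b : {ffun vdom k -> T}) G a b.
Proof.
set N := (\sum_(l < m) k l)%N.
pose g (s : {ffun 'I_(m + N) -> T}) :=
  ([ffun i => s (lshift N i)], [ffun p => s (rshift m (vpos p))]).
have [vinv _ vinvK] := vpos_bij k.
have g_inj : injective g.
  move=> s1 s2 [/ffunP eq_l /ffunP eq_r]; apply/ffunP => j.
  case: (splitP j) => [i ji | q jq].
    have -> : j = lshift N i by apply: ord_inj.
    by move: (eq_l i); rewrite !ffunE.
  have -> : j = rshift m (vpos (vinv q)) by apply: ord_inj; rewrite vinvK.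
  by move: (eq_r (vinv q)); rewrite !ffunE.
rewrite pair_bigA (reindex g) //=; apply/onW_bij/inj_card_bij => //.
by rewrite card_prod !card_ffun !card_ord -expnD card_vdom.
Qed.

Lemma prod_split_last (R : comPzSemiRingType) m (k : 'I_m -> nat)
    (I : {set 'I_(m + \sum_(l < m) k l)}) (f : 'I_(m + \sum_(l < m) k l) -> R) :
  (forall q, rshift m q \in I) ->
  \prod_(j in I) f j =
  (\prod_(i < m | lshift _ i \in I) f (lshift _ i)) *
  \prod_(p : vdom k) f (rshift m (vpos p)).
Proof.
move=> I_last; rewrite big_split_ord; congr (_ * _).
rewrite (eq_bigl xpredT) => [|q]; last by rewrite I_last.
by rewrite (reindex (@vpos m k)) //; apply/onW_bij/vpos_bij.
Qed.

Definition slice (n : nat) (T : finType) (a : {ffun T -> {perm 'I_n}}) (v : 'I_n) :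
  {ffun T -> 'I_n} := [ffun j => a j v].

Lemma sliceE n (T : finType) (a : {ffun T -> {perm 'I_n}}) v j : slice a v j = a j v.
Proof. exact: ffunE. Qed.

Definition spread (n m : nat) (k : 'I_m -> nat) (a : {ffun 'I_m -> 'I_n}) :
  {ffun vdom k -> 'I_n} := [ffun p => a (tag p)].

Lemma spreadE n m (k : 'I_m -> nat) (a : {ffun 'I_m -> 'I_n}) p :
  spread k a p = a (tag p).
Proof. exact: ffunE. Qed.

(** * Moebius inversion on a factor-closed set *)

Section FactorClosedSet.

Variables (n : nat) (x : 'I_n -> nat).

Definition fdvd (T : finType) (e w : {ffun T -> 'I_n}) : bool :=
  [forall p, x (e p) %| x (w p)]%N.

Lemma fdvdP {T : finType} {e w : {ffun T -> 'I_n}} :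
  reflect (forall p, x (e p) %| x (w p))%N (fdvd e w).
Proof. exact: forallP. Qed.

Lemma fdvd_natr (R : comPzSemiRingType) (T : finType) (e w : {ffun T -> 'I_n}) :
  (fdvd e w)%:R = \prod_p (x (e p) %| x (w p))%:R :> R.
Proof. by rewrite prodr_bool. Qed.

Definition zeta_rows (R : pzSemiRingType) (g : 'I_n -> 'I_n) : 'M[R]_n :=
  \matrix_(v, i) (x (g v) %| x i)%N%:R.

Lemma det_zeta_rows_noninj (R : comPzRingType) g :
  ~~ injectiveb g -> \det (zeta_rows R g) = 0.
Proof.
move=> /injectivePn[v1 [v2 v12 g12]]; apply: (determinant_alternate v12) => i.
by rewrite !mxE g12.
Qed.

Definition moebius_quot (R : pzRingType) (T : finType) (e' e : {ffun T -> 'I_n}) : R :=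
  \prod_p (moebius (x (e p) %/ x (e' p)))%:~R.

Hypothesis x_fc : factor_closed_enum x.

Lemma fc_gt0 i : (0 < x i)%N.
Proof. by case: x_fc => _ []. Qed.

Lemma fc_inj : injective x.
Proof. by case: x_fc. Qed.

Lemma fc_divisor i d : (0 < d)%N -> (d %| x i)%N -> {j : 'I_n | x j = d}.
Proof.
move=> d_gt0 d_xi; case: (pickP (fun j => x j == d)) => [j /eqP <-|none]; first by exists j.
exfalso; case: x_fc => _ [_ /(_ i d d_gt0 d_xi) [j xj]].
by move: (none j); rewrite xj eqxx.
Qed.

Lemma fc_dvd_le i j : (x i %| x j)%N -> (x i <= x j)%N.
Proof. exact/dvdn_leq/fc_gt0. Qed.

Lemma perm_eq_of_dvd (s t : {perm 'I_n}) : (forall v, x (t v) %| x (s v))%N -> t = s.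
Proof.
move=> ts; have le_ts v : (x (t v) <= x (s v))%N by apply: fc_dvd_le.
have sum_perm (u : {perm 'I_n}) : (\sum_v x (u v) = \sum_v x v)%N.
  by rewrite [RHS](reindex_inj (@perm_inj _ u)).
have : (\sum_v (x (s v) - x (t v)) == 0)%N by rewrite sumnB // !sum_perm subnn.
rewrite sum_nat_eq0 => /forallP s_t; apply/permP => v; apply: fc_inj.
by apply/eqP; rewrite eqn_leq le_ts -subn_eq0 (implyP (s_t v)).
Qed.

Lemma det_zeta_rows_perm (R : comPzRingType) (t : {perm 'I_n}) :
  \det (zeta_rows R t) = (-1) ^+ t.
Proof.
rewrite /determinant (bigD1 t) //= big1 => [|v _]; last by rewrite mxE dvdnn.
rewrite mulr1 big1 ?addr0 // => s /eqP st.
have [v /negbTE tNs | ts] := pickP (fun v => ~~ (x (t v) %| x (s v))%N).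
  by rewrite (bigD1 v) //= mxE tNs mul0r mulr0.
by case: st; apply/esym/perm_eq_of_dvd => v; apply: negbFE (ts v).
Qed.

Lemma sum_bounded_divisors_fc (R : nmodType) (T : finType) (G : {ffun T -> nat} -> R)
    (w : {ffun T -> 'I_n}) M : (forall p, x (w p) <= M)%N ->
  \sum_(delta : {ffun T -> 'I_M.+1} | [forall p, nat_of_ord (delta p) %| x (w p)]%N)
      G [ffun p => nat_of_ord (delta p)]
  = \sum_(e | fdvd e w) G [ffun p => x (e p)].
Proof.
move=> le_wM.
have inordK_dvd d p : (d %| x (w p))%N -> (inord d : 'I_M.+1) = d :> nat.
  by move=> dw; rewrite inordK // ltnS (leq_trans (dvdn_leq (fc_gt0 (w p)) dw)).
pose h (e : {ffun T -> 'I_n}) : {ffun T -> 'I_M.+1} := [ffun p => inord (x (e p))].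
pose h' (delta : {ffun T -> 'I_M.+1}) :=
  [ffun p => odflt (w p) [pick j | x j == delta p]].
have dvd_h e : [forall p, nat_of_ord (h e p) %| x (w p)]%N = fdvd e w.
  by apply: eq_forallb => p; rewrite ffunE dvdn_inord ?fc_gt0.
rewrite (reindex_onto h h').
  apply: eq_big => [e | e]; rewrite dvd_h; last first.
    move=> /andP[/fdvdP ew _]; congr G; apply/ffunP => p.
    by rewrite !ffunE (inordK_dvd _ _ (ew p)).
  apply/andb_idr => /fdvdP ew; apply/eqP/ffunP => p.
  rewrite !ffunE (inordK_dvd _ _ (ew p)).
  by case: pickP => [j /eqP /fc_inj // | /(_ (e p))]; rewrite eqxx.
move=> delta /forallP dw; apply/ffunP => p; rewrite !ffunE.
have [j xj] := fc_divisor (dvdn_gt0 (fc_gt0 (w p)) (dw p)) (dw p).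
case: pickP => [j' /eqP -> | /(_ j)]; first exact: inord_val.
by rewrite xj eqxx.
Qed.

Variable R : comNzRingType.

Lemma sum_moebius_fc a b :
  \sum_(t | ((x a %| x t) && (x t %| x b))%N) (moebius (x t %/ x a))%:~R = (a == b)%:R :> R.
Proof.
have xa_gt0 := fc_gt0 a.
have [/dvdnP[c xb]|xaNxb] := boolP (x a %| x b)%N; last first.
  rewrite big_pred0 => [|t]; last by apply: contraNF xaNxb => /andP[/dvdn_trans]; apply.
  by have /negbTE-> : a != b by apply: contraNneq xaNxb => ->; apply: dvdnn.
have c_gt0 : (0 < c)%N by move: (fc_gt0 b); rewrite xb muln_gt0 => /andP[].
rewrite -big_filter -(big_map (fun t => x t %/ x a)%N xpredT (fun d => (moebius d)%:~R)).
have -> : (a == b) = (c == 1)%N.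
  apply/eqP/eqP => [ab|c1]; last by apply: fc_inj; rewrite xb c1 mul1n.
  by apply/eqP; rewrite -(eqn_pmul2r xa_gt0) mul1n -xb ab.
transitivity ((\sum_(d <- divisors c) moebius d)%:~R : R); last first.
  by rewrite sum_moebius_divisors //; case: (c == 1)%N.
rewrite rmorph_sum; apply/perm_big/uniq_perm.
- rewrite map_inj_in_uniq ?filter_uniq ?index_enum_uniq // => t u.
  rewrite !mem_filter => /andP[/andP[at_ _] _] /andP[/andP[au _] _] eq_q.
  by apply: fc_inj; rewrite -(divnK at_) -(divnK au) eq_q.
- exact: divisors_uniq.
move=> d; rewrite -dvdn_divisors //; apply/mapP/idP => [[t]|d_c].
  rewrite mem_filter => /andP[/andP[/dvdnP[e ->] txb] _] ->.
  by rewrite mulnK //; move: txb; rewrite xb dvdn_pmul2r.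
have [t xt] : {t | x t = (d * x a)%N}.
  by apply: (@fc_divisor b); rewrite ?muln_gt0 ?xa_gt0 ?(dvdn_gt0 c_gt0) // xb dvdn_pmul2r.
exists t; last by rewrite xt mulnK.
by rewrite mem_filter mem_index_enum xt dvdn_mull //= andbT xb dvdn_pmul2r.
Qed.

Lemma moebius_inversion_fc (T : finType) (Phi : {ffun T -> 'I_n} -> R) w :
  \sum_(e | fdvd e w) \sum_(e' | fdvd e' e) Phi e' * moebius_quot R e' e = Phi w.
Proof.
transitivity (\sum_e' Phi e' * \prod_p \sum_t
    (x (e' p) %| x t)%N%:R * (x t %| x (w p))%N%:R * (moebius (x t %/ x (e' p)))%:~R).
  rewrite (exchange_big_dep xpredT) //=; apply: eq_bigr => e' _.
  rewrite -big_distrr bigA_distr_bigA big_mkcond /=; congr (_ * _); apply: eq_bigr => e _.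
  rewrite !big_split /= -!fdvd_natr.
  by case: (fdvd e w); case: (fdvd e' e); rewrite ?(mul0r, mul1r).
transitivity (\sum_e' Phi e' * (e' == w)%:R).
  apply: eq_bigr => e' _; congr (_ * _).
  have -> : (e' == w) = [forall p, e' p == w p].
    by apply/eqP/eqfunP => [->|/ffunP].
  rewrite -prodr_bool; apply: eq_bigr => p _.
  rewrite -sum_moebius_fc [RHS]big_mkcond; apply: eq_bigr => t _.
  by case: (x (e' p) %| x t)%N; case: (x t %| x (w p))%N; rewrite ?(mul0r, mul1r).
rewrite (bigD1 w) //= eqxx mulr1 big1 ?addr0 // => e' /negbTE ->.
by rewrite mulr0.
Qed.

End FactorClosedSet.

(** * Even functions *)

Section EvenFunction.

Variables (C : numClosedFieldType) (n m : nat) (x : 'I_n -> nat) (k : 'I_m -> nat).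
Variable F : {ffun 'I_m -> nat} -> {ffun vdom k -> nat} -> C.

Definition Fx (a : {ffun 'I_m -> 'I_n}) (e : {ffun vdom k -> 'I_n}) : C :=
  F [ffun j => x (a j)] [ffun p => x (e p)].

Definition mcoef (a : {ffun 'I_m -> 'I_n}) (e : {ffun vdom k -> 'I_n}) : C :=
  (fdvd x e (spread k a))%:R * \sum_(e' | fdvd x e' e) Fx a e' * moebius_quot x C e' e.

Local Notation N := (\sum_(l < m) k l)%N.

Lemma sum_signed_matB_split (I : {set 'I_(m + N)}) :
  (forall q, rshift m q \in I) ->
  \sum_(s : {ffun 'I_(m + N) -> {perm 'I_n}})
      (\prod_(j in I) psign C (s j)) * \prod_v matB x F [ffun j => s j v]
  = \sum_(a : {ffun 'I_m -> {perm 'I_n}})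
      (\prod_(i < m | lshift N i \in I) (-1) ^+ a i) *
      \sum_(b : {ffun vdom k -> {perm 'I_n}})
        (\prod_p (-1) ^+ b p) * \prod_v Fx (slice a v) (slice b v).
Proof.
move=> I_last; under [RHS]eq_bigr do rewrite big_distrr /=.
rewrite -sum_ffun_split; apply: eq_bigr => s _.
rewrite (prod_split_last _ I_last) -mulrA; congr (_ * (_ * _)).
- by apply: eq_bigr => i _; rewrite ffunE.
- by apply: eq_bigr => p _; rewrite ffunE.
- by apply: eq_bigr => v _; rewrite /matB /Fx; congr F; apply/ffunP => ?; rewrite !ffunE.
Qed.

Hypothesis x_fc : factor_closed_enum x.
Hypothesis F_even : even_mod F.

Lemma Fx_expansion a w : Fx a w = \sum_(e | fdvd x e w) mcoef a e.
Proof.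
have gcd_gt0 p : (0 < gcdn (x (w p)) (x (a (tag p))))%N.
  by rewrite gcdn_gt0 (fc_gt0 x_fc).
pose g := [ffun p => sval (fc_divisor x_fc (gcd_gt0 p) (dvdn_gcdl _ _))].
have xg p : x (g p) = gcdn (x (w p)) (x (a (tag p))).
  by rewrite ffunE; case: fc_divisor.
clearbody g.
have -> : Fx a w = Fx a g.
  rewrite /Fx -F_even => [|j|p]; rewrite ?ffunE ?(fc_gt0 x_fc) //.
  by congr F; apply/ffunP => p; rewrite !ffunE xg.
rewrite -(moebius_inversion_fc x_fc (Fx a)) big_mkcond [RHS]big_mkcond.
apply: eq_bigr => e _; rewrite /mcoef.
have -> : fdvd x e g = fdvd x e w && fdvd x e (spread k a).
  apply/fdvdP/andP => [eg | [/fdvdP ew /fdvdP ea] p].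
    by split; apply/fdvdP => p; move: (eg p); rewrite xg dvdn_gcd ?spreadE => /andP[].
  by rewrite xg dvdn_gcd ew; move: (ea p); rewrite spreadE.
by case: (fdvd x e w); case: (fdvd x e (spread k a)); rewrite ?(mul0r, mul1r).
Qed.

Lemma sum_signed_prod_Fx (a : {ffun 'I_m -> {perm 'I_n}}) :
  \sum_(b : {ffun vdom k -> {perm 'I_n}})
      (\prod_p (-1) ^+ b p) * \prod_v Fx (slice a v) (slice b v)
  = \sum_(f : {ffun 'I_n -> {ffun vdom k -> 'I_n}})
      (\prod_v mcoef (slice a v) (f v)) * \prod_p \det (zeta_rows x C (fun v => f v p)).
Proof.
transitivity (\sum_(b : {ffun vdom k -> {perm 'I_n}})
    \sum_(f : {ffun 'I_n -> {ffun vdom k -> 'I_n}}) (\prod_p (-1) ^+ b p) *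
      \prod_v ((fdvd x (f v) (slice b v))%:R * mcoef (slice a v) (f v))).
  apply: eq_bigr => b _; rewrite -big_distrr /=; congr (_ * _).
  rewrite -(bigA_distr_bigA (fun v e => (fdvd x e (slice b v))%:R * mcoef (slice a v) e)).
  apply: eq_bigr => v _; rewrite Fx_expansion big_mkcond; apply: eq_bigr => e _.
  by case: fdvd; rewrite ?(mul0r, mul1r).
rewrite exchange_big; apply: eq_bigr => f _ /=.
transitivity ((\prod_v mcoef (slice a v) (f v)) *
    \sum_(b : {ffun vdom k -> {perm 'I_n}})
      \prod_p ((-1) ^+ b p * \prod_v (x (f v p) %| x (b p v))%N%:R)).
  rewrite big_distrr; apply: eq_bigr => b _ /=.
  have -> : \prod_v ((fdvd x (f v) (slice b v))%:R * mcoef (slice a v) (f v)) =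
      (\prod_p \prod_v (x (f v p) %| x (b p v))%N%:R) * \prod_v mcoef (slice a v) (f v).
    rewrite big_split /= exchange_big; congr (_ * _); apply: eq_bigr => v _.
    by rewrite fdvd_natr; apply: eq_bigr => p _; rewrite sliceE.
  by rewrite [X in _ = _ * X]big_split /=; ring.
congr (_ * _); rewrite -(bigA_distr_bigA (fun p (s : {perm 'I_n}) =>
  (-1) ^+ s * \prod_v (x (f v p) %| x (s v))%N%:R)).
by apply: eq_bigr => p _; apply: eq_bigr => s _; congr (_ * _); apply: eq_bigr => v _;
  rewrite mxE.
Qed.

(* An injective column of f is a permutation dividing a (tag p) pointwise,
   hence equal to it. *)
Lemma mcoef_zeta_offdiag (a : {ffun 'I_m -> {perm 'I_n}})
    (f : {ffun 'I_n -> {ffun vdom k -> 'I_n}}) :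
  f != [ffun v => spread k (slice a v)] ->
  (\prod_v mcoef (slice a v) (f v)) *
    \prod_(p : vdom k) \det (zeta_rows x C (fun v => f v p)) = 0.
Proof.
move=> /eqP fNdiag.
have [p fp_ninj | fp_inj] := pickP (fun p => ~~ injectiveb (fun v => f v p)).
  by rewrite [X in _ * X](bigD1 p) //= det_zeta_rows_noninj // mul0r mulr0.
have [v /negbTE fNa | f_dvd] := pickP (fun v => ~~ fdvd x (f v) (spread k (slice a v))).
  by rewrite (bigD1 v) //= {1}/mcoef fNa !mul0r.
case: fNdiag; apply/ffunP => v; apply/ffunP => p; rewrite ffunE spreadE sliceE.
have /injectiveP f_inj := negbFE (fp_inj p).
have <- : perm f_inj = a (tag p).
  apply: (perm_eq_of_dvd x_fc) => u; rewrite permE.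
  by move/fdvdP: (negbFE (f_dvd u)) => /(_ p); rewrite spreadE sliceE.
by rewrite permE.
Qed.

Lemma sum_signed_prod_Fx_diag (a : {ffun 'I_m -> {perm 'I_n}}) :
  \sum_(b : {ffun vdom k -> {perm 'I_n}})
      (\prod_p (-1) ^+ b p) * \prod_v Fx (slice a v) (slice b v)
  = (\prod_(p : vdom k) (-1) ^+ a (tag p)) *
    \prod_v mcoef (slice a v) (spread k (slice a v)).
Proof.
rewrite sum_signed_prod_Fx (bigD1 [ffun v => spread k (slice a v)]) //=.
rewrite [X in _ + X]big1 ?addr0 => [|f]; last exact: mcoef_zeta_offdiag.
rewrite mulrC; congr (_ * _); last by apply: eq_bigr => v _; rewrite ffunE.
apply: eq_bigr => p _; rewrite -(det_zeta_rows_perm x_fc); congr (\det _).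
by apply/matrixP => v i; rewrite !mxE ffunE spreadE sliceE.
Qed.

Lemma mcoef_diag (a : {ffun 'I_m -> 'I_n}) :
  mcoef a (spread k a) = (\prod_(p : vdom k) (x (a (tag p)))%:R) * matAlpha x F a.
Proof.
rewrite /mcoef /matAlpha /alpha (_ : fdvd x _ _ = true) ?mul1r; last by apply/fdvdP.
set r := [ffun j => x (a j)].
have -> : \prod_(p : vdom k) (x (a (tag p)))%:R = \prod_(j < m) (r j)%:R ^+ k j :> C.
  by rewrite -prod_vdom_tag; apply: eq_bigr => p _; rewrite ffunE.
rewrite mulrA mulfV ?mul1r; last first.
  rewrite prodf_seq_neq0; apply/allP => j _.
  by rewrite expf_neq0 // ffunE pnatr_eq0 -lt0n (fc_gt0 x_fc).
have le_max p : (x (spread k a p) <= \max_(j < m) r j)%N.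
  by rewrite spreadE (leq_trans _ (leq_bigmax (tag p))) ?ffunE.
pose G d := F r d * \prod_p (ramanujan (x (spread k a p) %/ d p) 1)%:~R.
transitivity (\sum_(e | fdvd x e (spread k a)) G [ffun p => x (e p)]).
  apply: eq_bigr => e _; rewrite /G /Fx /moebius_quot; congr (_ * _).
  by apply: eq_bigr => p _; rewrite !ffunE ramanujan_n1.
rewrite -(sum_bounded_divisors_fc x_fc G le_max).
apply: eq_big => [delta | delta _]; first by apply: eq_forallb => p; rewrite !ffunE.
by congr (_ * _); apply: eq_bigr => p _; rewrite !ffunE divnn (fc_gt0 x_fc).
Qed.

Lemma sum_signed_prod_Fx_alpha (a : {ffun 'I_m -> {perm 'I_n}}) :
  \sum_(b : {ffun vdom k -> {perm 'I_n}})
      (\prod_p (-1) ^+ b p) * \prod_v Fx (slice a v) (slice b v)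
  = (\prod_(j < m) ((-1) ^+ a j) ^+ k j) *
    ((\prod_(i < n) (x i)%:R) ^+ N * \prod_v matAlpha x F (slice a v)).
Proof.
rewrite sum_signed_prod_Fx_diag -prod_vdom_tag; congr (_ * _).
under eq_bigr do rewrite mcoef_diag; rewrite big_split /=; congr (_ * _).
rewrite exchange_big /= -(card_vdom k) -prodr_const; apply: eq_bigr => p _.
rewrite [RHS](reindex_inj (@perm_inj _ (a (tag p)))).
by apply: eq_bigr => v _; rewrite sliceE.
Qed.

End EvenFunction.

Theorem proposition4p4 (C : numClosedFieldType) (n m : nat) (x : 'I_n -> nat)
    (k : 'I_m -> nat)
    (F : {ffun 'I_m -> nat} -> {ffun vdom k -> nat} -> C)
    (I : {set 'I_(m + \sum_(l < m) k l)}) :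
  factor_closed_enum x ->
  (0 < m)%N ->
  even_mod F ->
  ~~ odd #|I| ->
  (forall q : 'I_(\sum_(l < m) k l), rshift m q \in I) ->
  hdet I (matB x F) =
  (\prod_(i < n) (x i)%:R) ^+ (\sum_(l < m) k l) *
  hdet [set j : 'I_m | odd ((lshift (\sum_(l < m) k l) j \in I) + k j)]
       (matAlpha x F).
Proof.
move=> x_fc _ F_even _ I_last.
rewrite /hdet mulrCA; congr (_ * _).
rewrite sum_signed_matB_split // big_distrr; apply: eq_bigr => a _.
by rewrite sum_signed_prod_Fx_alpha // mulrA prod_sign_parity mulrCA.
Qed.
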